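(* For every deterministic KAT automaton $A$ over $(\Sigma,T)$, there exist $k>0$ and maps $\mathfrak{s},\mathfrak{t}$ (with $\mathfrak{t}:T_k\to\mathsf{BA}(T)$ and $\mathfrak{s}$ assigning to each $p\in\Sigma_k$ a deterministic KAT automaton over $(\Sigma,T)$) such that $L(A)=L(\mathsf{compose}^{\mathfrak{s}}_{\mathfrak{t}}(A_k))$, where $A_k$ is the free automaton with $k$ states, and for all $p\in\Sigma_k$, $L(\mathfrak{s}(p))=L(p')$ for some $p'\in\Sigma$.
   Context: Atoms $\mathsf{At}_T=2^T$ for a finite test set $T$; $\mathsf{BA}(T)$ are Boolean expressions over $T$; $\alpha\le b$ means $b$ holds under the assignment making exactly the tests in $\alpha$ true. Guarded strings: words in $\mathsf{At}_T(\Sigma\mathsf{At}_T)^*$. For a primitive action $p$, $L(p)=\{\alpha p\beta:\alpha,\beta\in\mathsf{At}_T\}$. A deterministic KAT automaton over $(\Sigma,T)$ is $A=(Q,\delta,\iota)$ with $Q$ finite, $\delta:Q\times\mathsf{At}_T\to\{\mathsf{accept},\mathsf{reject}\}+\Sigma\times Q$, $\iota:\mathsf{At}_T\to\{\mathsf{accept},\mathsf{reject}\}+\Sigma\times Q$. For $\gamma:\mathsf{At}_T\to\{\mathsf{accept},\mathsf{reject}\}+\Sigma\times Q$, $L_A(\gamma)$ is the smallest set such that $\gamma(\alpha)=\mathsf{accept}$ implies $\alpha\in L_A(\gamma)$, and $\gamma(\alpha)=(p,q)$, $w\in L_A(\delta(q,-))$ imply $\alpha pw\in L_A(\gamma)$.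 $L(A)=L_A(\iota)$. Composition. (1) For $\mathfrak{t}:T_0\to\mathsf{BA}(T_1)$ and $A=(Q,\delta,\iota)$ over $(\Sigma,T_0)$: for $\beta\in\mathsf{At}_{T_1}$ let $\mathfrak{t}^{-1}(\beta)\in\mathsf{At}_{T_0}$ be the atom with $t\in\mathfrak{t}^{-1}(\beta)$ iff $\beta\le\mathfrak{t}(t)$; $\mathsf{compose}_{\mathfrak{t}}(A)=(Q,\delta',\iota')$ over $(\Sigma,T_1)$ with $\delta'(q,\beta)=\delta(q,\mathfrak{t}^{-1}(\beta))$, $\iota'(\beta)=\iota(\mathfrak{t}^{-1}(\beta))$. (2) For $A=(Q,\delta,\iota)$ over $(\Sigma_0,T)$ and $\mathfrak{s}$ assigning to each $p\in\Sigma_0$ an automaton $\mathfrak{s}(p)=(Q_p,\delta_p,\iota_p)$ over $(\Sigma_1,T)$: define $\hat\delta(q,\alpha)$ by: $\mathsf{accept}$ if $\delta(q,\alpha)=\mathsf{accept}$; $(p,q')$ if $\delta(q,\alpha)=(p,q')$ and $\iota_p(\alpha)\ne\mathsf{accept}$; $\hat\delta(q',\alpha)$ if $\delta(q,\alpha)=(p,q')$ and $\iota_p(\alpha)=\mathsf{accept}$; $\mathsf{reject}$ otherwise (including when this recursion never terminates). Define $\hat\iota(\alpha)=\hat\delta(q,\alpha)$ if $\iota(\alpha)=(p,q)$ and $\iota_p(\alpha)=\mathsf{accept}$, and $\hat\iota(\alpha)=\iota(\alpha)$ otherwise. Then $\mathsf{compose}^{\mathfrak{s}}(A)=(Q',\delta',\iota')$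 over $(\Sigma_1,T)$ with $Q'=\sum_{p\in\Sigma_0}Q_p\times Q$ (disjoint union), and for $q_p\in Q_p$, $q\in Q$: $\delta'((q_p,q),\alpha)=(p'',(q_p',q))$ if $\delta_p(q_p,\alpha)=(p'',q_p')$; $=(p'',(q_{p'},q'))$ if $\delta_p(q_p,\alpha)=\mathsf{accept}$, $\hat\delta(q,\alpha)=(p',q')$ and $\iota_{p'}(\alpha)=(p'',q_{p'})$; $=\mathsf{accept}$ if $\delta_p(q_p,\alpha)=\mathsf{accept}$ and $\hat\delta(q,\alpha)=\mathsf{accept}$; $=\mathsf{reject}$ otherwise. $\iota'(\alpha)=\mathsf{accept}$ if $\hat\iota(\alpha)=\mathsf{accept}$; $=(p'',(q_{p'},q))$ if $\hat\iota(\alpha)=(p',q)$ and $\iota_{p'}(\alpha)=(p'',q_{p'})$; $=\mathsf{reject}$ otherwise. (3) $\mathsf{compose}^{\mathfrak{s}}_{\mathfrak{t}}(A)=\mathsf{compose}^{\mathfrak{s}}(\mathsf{compose}_{\mathfrak{t}}(A))$. Free automaton with $k$ states: $A_k=(Q,\delta,\iota)$ over actions $\Sigma_k=\{p_1,\dots,p_k\}$ and tests $T_k=\{t_{i,j}:0\le i,j\le k\}$, $Q=\{q_1,\dots,q_k\}$. For $0\le i,j\le k$ let $b_{i,j}\in\mathsf{BA}(T_k)$ be the test that holds when $t_{i,j}$ is true and $t_{i,m}$ is false for all $m<j$ (so for fixed $i$ the $b_{i,j}$ are mutually exclusive). Then $\delta(q_i,\alpha)=\mathsf{accept}$ if $\alpha\le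 b_{i,0}$, $=(p_j,q_j)$ if $\alpha\le b_{i,j}$ ($1\le j\le k$), $=\mathsf{reject}$ otherwise; $\iota(\alpha)=\mathsf{accept}$ if $\alpha\le b_{0,0}$, $=(p_j,q_j)$ if $\alpha\le b_{0,j}$ ($1\le j\le k$), $=\mathsf{reject}$ otherwise. *)

From mathcomp Require Import all_boot.
From Stdlib Require Import ClassicalEpsilon.

Set Implicit Arguments.
Unset Strict Implicit.
Unset Printing Implicit Defensive.

Inductive bexp (T : Type) : Type :=
| BVar of T
| BTrue
| BFalse
| BNot of bexp T
| BAnd of bexp T & bexp T
| BOr of bexp T & bexp T.

Arguments BTrue {T}.
Arguments BFalse {T}.

(* An atom is the set of tests that are true. *)
Definition atom (T : finType) := {set T}.

Fixpoint bholds (T : finType) (alpha : atom T) (b : bexp T) : bool :=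
  match b with
  | BVar t => t \in alpha
  | BTrue => true
  | BFalse => false
  | BNot b1 => ~~ bholds alpha b1
  | BAnd b1 b2 => bholds alpha b1 && bholds alpha b2
  | BOr b1 b2 => bholds alpha b1 || bholds alpha b2
  end.

(* alpha0 p1 alpha1 ... pn alphan  is represented as (alpha0, [:: (p1,alpha1); ...; (pn,alphan)]) *)
Definition gstring (Sigma : Type) (T : finType) := (atom T * seq (Sigma * atom T))%type.

Definition language (Sigma : Type) (T : finType) := gstring Sigma T -> Prop.

Definition lang_eq (Sigma : Type) (T : finType) (L1 L2 : language Sigma T) : Prop :=
  forall w, L1 w <-> L2 w.

Definition Lprim (Sigma : Type) (T : finType) (p : Sigma) : language Sigma T :=
  fun w => exists alpha beta, w = (alpha, [:: (p, beta)]).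

Inductive out (Sigma Q : Type) : Type :=
| Acc
| Rej
| Step of Sigma & Q.

Arguments Acc {Sigma Q}.
Arguments Rej {Sigma Q}.

Record dkat (Sigma : Type) (T : finType) : Type := DKat {
  st : finType;
  dl : st -> atom T -> out Sigma st;
  io : atom T -> out Sigma st
}.

Arguments st {Sigma T} d.
Arguments dl {Sigma T} d _ _.
Arguments io {Sigma T} d _.

Inductive LA (Sigma : Type) (T : finType) (A : dkat Sigma T) :
    (atom T -> out Sigma (st A)) -> gstring Sigma T -> Prop :=
| LA_acc (gamma : atom T -> out Sigma (st A)) alpha :
    gamma alpha = Acc -> @LA Sigma T A gamma (alpha, [::])
| LA_step (gamma : atom T -> out Sigma (st A)) alpha p q beta w :
    gamma alpha = Step p q -> @LA Sigma T A (dl A q) (beta, w) ->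
    @LA Sigma T A gamma (alpha, (p, beta) :: w).

Definition L (Sigma : Type) (T : finType) (A : dkat Sigma T) : language Sigma T :=
  @LA Sigma T A (io A).

Section ComposeT.
Variables (Sigma : Type) (T0 T1 : finType).
Variable (tt : T0 -> bexp T1).

Definition tinv (beta : atom T1) : atom T0 := [set t | bholds beta (tt t)].

Definition compose_t (A : dkat Sigma T0) : dkat Sigma T1 :=
  @DKat Sigma T1 (st A) (fun q beta => dl A q (tinv beta)) (fun beta => io A (tinv beta)).

End ComposeT.

Section ComposeS.
Variables (Sigma0 : finType) (Sigma1 : Type) (T : finType).
Variable (A : dkat Sigma0 T).
Variable (s : Sigma0 -> dkat Sigma1 T).

(* hat_rel q alpha r : the recursion defining hat-delta(q,alpha) terminates with value r *)
Inductive hat_rel : st A -> atom T -> out Sigma0 (st A) -> Prop :=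
| hat_acc q alpha : dl A q alpha = Acc -> hat_rel q alpha Acc
| hat_rej q alpha : dl A q alpha = Rej -> hat_rel q alpha Rej
| hat_stop q alpha p q' :
    dl A q alpha = Step p q' -> io (s p) alpha <> Acc -> hat_rel q alpha (Step p q')
| hat_skip q alpha p q' r :
    dl A q alpha = Step p q' -> io (s p) alpha = Acc -> hat_rel q' alpha r ->
    hat_rel q alpha r.

(* hat-delta(q,alpha): the result of the recursion, or reject if it never terminates *)
Definition hat_delta (q : st A) (alpha : atom T) : out Sigma0 (st A) :=
  match excluded_middle_informative (exists r, hat_rel q alpha r) with
  | left H => proj1_sig (constructive_indefinite_description _ H)
  | right _ => Rej
  end.

Definition hat_iota (alpha : atom T) : out Sigma0 (st A) :=
  match io A alpha with
  | Step p q =>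
      match io (s p) alpha with
      | Acc => hat_delta q alpha
      | _ => io A alpha
      end
  | _ => io A alpha
  end.

Definition cstate : finType := {p : Sigma0 & (st (s p) * st A)%type}.

Definition mkc (p : Sigma0) (qp : st (s p)) (q : st A) : cstate :=
  existT (fun p => (st (s p) * st A)%type) p (qp, q).

Definition cdelta (x : cstate) (alpha : atom T) : out Sigma1 cstate :=
  match x with
  | existT p (qp, q) =>
      match dl (s p) qp alpha with
      | Step p'' qp' => Step p'' (@mkc p qp' q)
      | Acc =>
          match hat_delta q alpha with
          | Acc => Acc
          | Step p' q' =>
              match io (s p') alpha with
              | Step p'' qp' => Step p'' (@mkc p' qp' q')
              | _ => Rej
              end
          | Rej => Rej
          end
      | Rej => Rej
      end
  end.

Definition ciota (alpha : atom T) : out Sigma1 cstate :=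
  match hat_iota alpha with
  | Acc => Acc
  | Step p' q =>
      match io (s p') alpha with
      | Step p'' qp => Step p'' (@mkc p' qp q)
      | _ => Rej
      end
  | Rej => Rej
  end.

Definition compose_s : dkat Sigma1 T := @DKat Sigma1 T cstate cdelta ciota.

End ComposeS.

Definition compose_st (Sigma0 : finType) (Sigma1 : Type) (T0 T1 : finType)
  (s : Sigma0 -> dkat Sigma1 T1) (tt : T0 -> bexp T1) (A : dkat Sigma0 T0) : dkat Sigma1 T1 :=
  compose_s (compose_t tt A) s.

(* Actions Sigma_k = {p_1..p_k} are encoded as 'I_k (p_j ~ j-1);
   states Q = {q_1..q_k} as 'I_k (q_i ~ i-1);
   tests T_k = {t_{i,j} : 0 <= i,j <= k} as 'I_k.+1 * 'I_k.+1 (t_{i,j} ~ (i,j)). *)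

Section Free.
Variable k : nat.

Definition free_tests : finType := ('I_k.+1 * 'I_k.+1)%type.

Definition bij (i j : 'I_k.+1) : bexp free_tests :=
  BAnd (BVar (i, j))
       (foldr (fun (m : 'I_k.+1) b => BAnd (BNot (BVar (i, m))) b) BTrue
              (filter (fun m : 'I_k.+1 => (m < j)%N) (enum 'I_k.+1))).

(* the transition out of row i: accept if alpha <= b_{i,0},
   (p_j, q_j) if alpha <= b_{i,j} (1 <= j <= k), reject otherwise *)
Definition free_row (i : 'I_k.+1) (alpha : atom free_tests) : out 'I_k 'I_k :=
  match [pick j : 'I_k.+1 | bholds alpha (bij i j)] with
  | Some j =>
      match unlift ord0 j with
      | None => Acc
      | Some j' => Step j' j'
      end
  | None => Rej
  end.

Definition free_aut : dkat 'I_k free_tests :=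
  @DKat 'I_k free_tests 'I_k (fun q alpha => free_row (lift ord0 q) alpha) (free_row ord0).

End Free.

From mathcomp Require Import all_boot.
From Stdlib Require Import ClassicalEpsilon.

(* The states of the free automaton name the transitions of A: a pair (source,
   atom), the source being a state of A or the initial position.  Substituting
   for t_{i,j} the disjunction of the atoms on which row i should move to column
   j makes the free automaton jump, from the state naming a transition into q, to
   the state naming the transition out of q on the current atom; the action p_j
   is replaced by the one-step automaton for the action of transition j.  These
   substitutes never accept the empty word, so the composition takes no shortcut
   and is bisimilar to A. *)

Set Implicit Arguments.
Unset Strict Implicit.
Unset Printing Implicit Defensive.

Lemma lang_eq_trans (Sigma : Type) (T : finType) (L1 L2 L3 : language Sigma T) :
  lang_eq L1 L2 -> lang_eq L2 L3 -> lang_eq L1 L3.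
Proof. by move=> H12 H23 w; apply: iff_trans (H12 w) (H23 w). Qed.

Definition out_rel (Sigma Q1 Q2 : Type) (R : Q1 -> Q2 -> Prop)
    (o1 : out Sigma Q1) (o2 : out Sigma Q2) : Prop :=
  match o1, o2 with
  | Acc, Acc | Rej, Rej => True
  | Step a q, Step b x => a = b /\ R q x
  | _, _ => False
  end.

Section Bisimulation.
Variables (Sigma : Type) (T : finType) (A B : dkat Sigma T).
Variable R : st A -> st B -> Prop.

Hypothesis dl_rel : forall q x alpha, R q x -> out_rel R (dl A q alpha) (dl B x alpha).

Lemma LA_bisim g1 g2 : (forall alpha, out_rel R (g1 alpha) (g2 alpha)) ->
  forall w, LA g1 w <-> LA g2 w.
Proof.
move=> + [alpha w]; elim: w alpha g1 g2 => [|[p beta] w IHw] alpha g1 g2 g12.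
  split=> H; inversion H as [? ? Hacc|]; subst; apply: LA_acc;
    have := g12 alpha; rewrite Hacc.
  - by case: (g2 alpha).
  - by case: (g1 alpha).
split=> H; inversion H as [|? ? ? q ? ? Hstep Hw]; subst;
  have := g12 alpha; rewrite Hstep.
- case E: (g2 alpha) => [| |b x] //= [-> Rqx].
  exact: LA_step E ((IHw beta (dl A q) (dl B x) (fun _ => dl_rel _ Rqx)).1 Hw).
- case E: (g1 alpha) => [| |b x] //= [<- Rxq].
  exact: LA_step E ((IHw beta (dl A x) (dl B q) (fun _ => dl_rel _ Rxq)).2 Hw).
Qed.

Lemma L_bisim : (forall alpha, out_rel R (io A alpha) (io B alpha)) -> lang_eq (L A) (L B).
Proof. exact: LA_bisim. Qed.

End Bisimulation.

Definition single (Sigma : Type) (T : finType) (a : Sigma) : dkat Sigma T :=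
  @DKat Sigma T unit (fun _ _ => Acc) (fun _ => Step a tt).

Lemma L_single (Sigma : Type) (T : finType) (a : Sigma) :
  lang_eq (L (single T a)) (@Lprim Sigma T a).
Proof.
move=> [alpha w]; split.
- move=> H; inversion H as [|g a1 p q beta w' E H']; subst; first by [].
  case: E => ->; inversion H'; subst; last by [].
  by exists alpha, beta.
- by move=> [_ [beta [_ ->]]]; apply: LA_step => //; apply: LA_acc.
Qed.

Definition out_relabel (Sigma0 Sigma1 Q : Type) (f : Sigma0 -> Sigma1)
    (o : out Sigma0 Q) : out Sigma1 Q :=
  match o with Acc => Acc | Rej => Rej | Step a q => Step (f a) q end.

Definition relabel (Sigma0 Sigma1 : Type) (T : finType) (f : Sigma0 -> Sigma1)
    (A : dkat Sigma0 T) : dkat Sigma1 T :=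
  @DKat Sigma1 T (st A) (fun q alpha => out_relabel f (dl A q alpha))
    (fun alpha => out_relabel f (io A alpha)).

Section ComposeNonAccepting.
Variables (Sigma0 : finType) (Sigma1 : Type) (T : finType).
Variables (A : dkat Sigma0 T) (s : Sigma0 -> dkat Sigma1 T).
Hypothesis s_nonaccepting : forall p alpha, io (s p) alpha <> Acc.

Lemma hat_delta_nonaccepting q alpha : hat_delta s q alpha = dl A q alpha.
Proof.
rewrite /hat_delta; case: excluded_middle_informative => [Hr|]; last first.
  case; exists (dl A q alpha); case E: (dl A q alpha) => [| |p q'].
  - exact: hat_acc.
  - exact: hat_rej.
  - by apply: hat_stop E _; apply: s_nonaccepting.
case: constructive_indefinite_description => r /= Hq; clear Hr.
by case: Hq => // {}q {}alpha p q' r' _ /s_nonaccepting.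
Qed.

Lemma hat_iota_nonaccepting alpha : hat_iota A s alpha = io A alpha.
Proof.
rewrite /hat_iota; case: (io A alpha) => // p q.
by case E: (io (s p) alpha) => //; case: (s_nonaccepting E).
Qed.

End ComposeNonAccepting.

Lemma compose_s_single (Sigma0 : finType) (Sigma1 : Type) (T : finType)
    (A : dkat Sigma0 T) (f : Sigma0 -> Sigma1) :
  lang_eq (L (relabel f A)) (L (compose_s A (fun p => single T (f p)))).
Proof.
pose R (q : st A) (x : cstate A (fun p => single T (f p))) := (projT2 x).2 = q.
apply: (@L_bisim _ _ (relabel f A) (compose_s A _) R).
- move=> q [p [u q']] alpha /= <-.
  by rewrite hat_delta_nonaccepting //; case: (dl A q' alpha).
- move=> alpha; rewrite /= /ciota hat_iota_nonaccepting //.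
  by case: (io A alpha).
Qed.

Definition bexp_of_atom (T : finType) (alpha : atom T) : bexp T :=
  foldr (fun t b => BAnd (if t \in alpha then BVar t else BNot (BVar t)) b) BTrue (enum T).

Lemma bholds_atom (T : finType) (alpha beta : atom T) :
  bholds beta (bexp_of_atom alpha) = (beta == alpha).
Proof.
have -> : forall r : seq T, bholds beta (foldr (fun t b =>
    BAnd (if t \in alpha then BVar t else BNot (BVar t)) b) BTrue r)
    = all (fun t => (t \in beta) == (t \in alpha)) r.
  by elim=> //= t r ->; case: (t \in alpha) => /=; case: (t \in beta).
apply/allP/eqP => [Heq | -> t _ //].
by apply/setP=> t; apply/eqP/Heq; rewrite mem_enum.
Qed.

Definition bexp_of_atoms (T : finType) (r : seq (atom T)) : bexp T :=
  foldr (fun alpha b => BOr (bexp_of_atom alpha) b) BFalse r.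

Lemma bholds_atoms (T : finType) (r : seq (atom T)) beta :
  bholds beta (bexp_of_atoms r) = (beta \in r).
Proof. by elim: r => //= alpha r ->; rewrite bholds_atom in_cons. Qed.

Section FreeRows.
Variables (k : nat) (T : finType).

Definition free_out (o : option 'I_k.+1) : out 'I_k 'I_k :=
  match o with
  | Some j => match unlift ord0 j with None => Acc | Some j' => Step j' j' end
  | None => Rej
  end.

Variable next : 'I_k.+1 -> atom T -> option 'I_k.+1.

Definition row_tests (ij : free_tests k) : bexp T :=
  bexp_of_atoms [seq alpha <- enum {: atom T} | next ij.1 alpha == Some ij.2].

Lemma in_tinv_row_tests alpha i j :
  ((i, j) \in tinv row_tests alpha) = (next i alpha == Some j).
Proof. by rewrite inE /row_tests bholds_atoms mem_filter mem_enum andbT. Qed.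

Lemma bholds_bij_row_tests alpha i j :
  bholds (tinv row_tests alpha) (bij i j) = (next i alpha == Some j).
Proof.
have bholds_fold (r : seq 'I_k.+1) : bholds (tinv row_tests alpha)
    (foldr (fun m b => BAnd (BNot (BVar (i, m))) b) BTrue r)
    = all (fun m => next i alpha != Some m) r.
  by elim: r => //= m r ->; rewrite in_tinv_row_tests.
rewrite /bij /= bholds_fold in_tinv_row_tests; case: eqP => //= ->.
apply/allP => m; rewrite mem_filter => /andP [ltmj _].
by apply/eqP => -[eq_jm]; rewrite eq_jm ltnn in ltmj.
Qed.

Lemma free_row_row_tests i alpha :
  free_row i (tinv row_tests alpha) = free_out (next i alpha).
Proof.
rewrite /free_row; case: pickP => [j | none_bij].
  by rewrite bholds_bij_row_tests => /eqP ->.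
case E: (next i alpha) => [j|] //.
by have := none_bij j; rewrite bholds_bij_row_tests E eqxx.
Qed.

End FreeRows.

Section FreeSimulation.
Variables (Sigma : Type) (T : finType) (A : dkat Sigma T) (a0 : Sigma).

Definition transition : finType := (option (st A) * atom T)%type.
Definition ntrans := #|{: transition}|.

Lemma ntrans_gt0 : 0 < ntrans.
Proof. by apply/card_gt0P; exists (None, set0). Qed.

Definition trans_out (x : transition) : out Sigma (st A) :=
  if x.1 is Some q then dl A q x.2 else io A x.2.

(* [a0] is a junk action for transitions that accept or reject. *)
Definition trans_act (x : transition) : Sigma :=
  if trans_out x is Step a _ then a else a0.

Definition trans_target (x : transition) : option (st A) :=
  if trans_out x is Step _ q then Some q else None.

Definition trans_code (x : transition) : option 'I_ntrans.+1 :=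
  match trans_out x with
  | Acc => Some ord0
  | Rej => None
  | Step _ _ => Some (lift ord0 (enum_rank x))
  end.

(* Row [0] is the initial row; rows naming a transition that does not step are
   unreachable and arbitrarily behave like it. *)
Definition row_source (i : 'I_ntrans.+1) : option (st A) :=
  if unlift ord0 i is Some j then trans_target (enum_val j) else None.

Definition free_next (i : 'I_ntrans.+1) (alpha : atom T) : option 'I_ntrans.+1 :=
  trans_code (row_source i, alpha).

Definition free_subst (p : 'I_ntrans) : dkat Sigma T := single T (trans_act (enum_val p)).

Definition target_rel (q : st A) (j : 'I_ntrans) : Prop := trans_target (enum_val j) = Some q.

Lemma trans_code_rel x :
  out_rel target_rel (trans_out x) (out_relabel (fun j => trans_act (enum_val j))
    (free_out (trans_code x))).
Proof.
rewrite /trans_code /target_rel /trans_act /trans_target /=.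
case E: (trans_out x) => [| |a q] //=; first by rewrite unlift_none.
by rewrite liftK /= enum_rankK E.
Qed.

Definition free_instance : dkat Sigma T :=
  relabel (fun j => trans_act (enum_val j))
    (compose_t (row_tests free_next) (free_aut ntrans)).

Lemma L_free_instance : lang_eq (L A) (L free_instance).
Proof.
apply: (@L_bisim _ _ A free_instance target_rel) => [q j alpha Rqj | alpha] /=;
  rewrite free_row_row_tests.
- by have := trans_code_rel (Some q, alpha); rewrite /free_next /row_source liftK Rqj.
- by have := trans_code_rel (None, alpha); rewrite /free_next /row_source unlift_none.
Qed.

End FreeSimulation.

Unset Implicit Arguments.
Set Strict Implicit.

Theorem proposition7p2 (Sigma : Type) (T : finType) (A : dkat Sigma T) :
  inhabited Sigma ->
  exists k : nat, 0 < k /\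
    exists (s : 'I_k -> dkat Sigma T) (tt : free_tests k -> bexp T),
      lang_eq (L A) (L (compose_st s tt (free_aut k))) /\
      (forall p : 'I_k, exists p' : Sigma, lang_eq (L (s p)) (@Lprim Sigma T p')).
Proof.
case=> a0; exists (ntrans A); split; first exact: ntrans_gt0.
exists (free_subst (A:=A) a0), (row_tests (free_next (A:=A))); split.
- apply: lang_eq_trans (L_free_instance A a0) _.
  exact: compose_s_single.
- by move=> p; exists (trans_act a0 (enum_val p)); apply: L_single.
Qed.
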